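(* Let $\mathcal T=(S,\Sigma,\kappa)$ be an STS and $B\in\Sigma$. Suppose $\mathcal T$ is globally coarse w.r.t. $B$, i.e., there exists $p>0$ such that for every $s\in S$, either $\mathbb P^{\mathcal T}_{\delta_s}(\mathbf F B)\ge p$ or $\mathbb P^{\mathcal T}_{\delta_s}(\mathbf F B)=0$. Then $\mathcal T$ is decisive with respect to $B$.
   Context: A stochastic transition system (STS) is a triple $\mathcal T=(S,\Sigma,\kappa)$ where $(S,\Sigma)$ is a measurable space and $\kappa:S\times\Sigma\to[0,1]$ is a Markov kernel. $\mathrm{Dist}(S)$: probability distributions on $(S,\Sigma)$; $\delta_s$: Dirac at $s$. $\mathbb P^{\mathcal T}_\mu$ is the probability measure on runs $S^\omega$ induced by initial distribution $\mu$ and $\kappa$. $\mathbf F B$: runs visiting $B$ at some step. $\widetilde B=\{s\in S:\mathbb P^{\mathcal T}_{\delta_s}(\mathbf F B)=0\}$ (assumed measurable). $\mathcal T$ is decisive w.r.t. $B$ if for every $\mu\in\mathrm{Dist}(S)$, $\mathbb P^{\mathcal T}_\mu(\mathbf F B\vee\mathbf F\widetilde B)=1$. *)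

From HB Require Import structures.
From mathcomp Require Import all_boot all_order all_algebra.
From mathcomp Require Import all_classical all_reals all_analysis.
Set Implicit Arguments. Unset Strict Implicit. Unset Printing Implicit Defensive.
Import Order.TTheory GRing.Theory Num.Theory.
Local Open Scope classical_set_scope.
Local Open Scope ring_scope.

Definition run (S : Type) := nat -> S.

Definition run_display : measure_display -> measure_display.
Proof. exact. Qed.

Section run_measurable.
Context {d : measure_display} {S : measurableType d}.

HB.instance Definition _ := Pointed.on (run S).

Definition run_measurable : set (set (run S)) :=
  <<s \bigcup_(n in [set: nat])
        preimage_set_system [set: run S] (fun r : run S => r n) measurable >>.

Let run_set0 : run_measurable set0.
Proof. exact: sigma_algebra0. Qed.
Let run_setC A : run_measurable A -> run_measurable (~` A).
Proof. exact: sigma_algebraC. Qed.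
Let run_bigcup (F : (set (run S))^nat) : (forall i, run_measurable (F i)) ->
  run_measurable (\bigcup_i (F i)).
Proof. exact: sigma_algebra_bigcup. Qed.

HB.instance Definition _ := @isMeasurable.Build (run_display d)
  (run S) run_measurable run_set0 run_setC run_bigcup.
End run_measurable.

Section sts.
Context {d : measure_display} {S : measurableType d} {R : realType}.
Local Open Scope ereal_scope.

Fixpoint cyl (kappa : R.-pker S ~> S) (As : seq (set S)) (s : S) : \bar R :=
  match As with
  | [::] => 1
  | A :: As' => (\1_A s)%:E * \int[kappa s]_y cyl kappa As' y
  end.

(* P is the probability measure P_mu on runs induced by the initial
   distribution mu and the Markov kernel kappa: it satisfies the
   cylinder-set formula (which determines it uniquely). *)
Definition is_run_measure (kappa : R.-pker S ~> S)
    (mu : {measure set S -> \bar R}) (P : probability (run S) R) : Prop :=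
  forall As : seq (set S), (forall A, A \in As -> measurable A) ->
    P [set r : run S | forall i, (i < size As)%N -> nth setT As i (r i)]
    = \int[mu]_s cyl kappa As s.

Definition Fev (B : set S) : set (run S) := [set r | exists n, B (r n)].

(* B~ = { s | P_{delta_s}(F B) = 0 }, where Pd s is the run measure P_{delta_s} *)
Definition Btilde (Pd : S -> probability (run S) R) (B : set S) : set S :=
  [set s | Pd s (Fev B) = 0].

Definition decisive (kappa : R.-pker S ~> S) (Pd : S -> probability (run S) R)
    (B : set S) : Prop :=
  forall (mu : probability S R) (P : probability (run S) R),
    is_run_measure kappa mu P ->
    P (Fev B `|` Fev (Btilde Pd B)) = 1.

Definition globally_coarse (Pd : S -> probability (run S) R) (B : set S) : Prop :=
  exists p : R, (0 < p)%R /\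
    forall s, p%:E <= Pd s (Fev B) \/ Pd s (Fev B) = 0.
End sts.

From HB Require Import structures.
From mathcomp Require Import all_boot all_order all_algebra.
From mathcomp Require Import all_classical all_reals all_analysis.
From mathcomp Require Import measurable_realfun.
Set Implicit Arguments. Unset Strict Implicit. Unset Printing Implicit Defensive.
Import Order.TTheory GRing.Theory Num.Theory.
Local Open Scope classical_set_scope.
Local Open Scope ring_scope.

(* Let D = ~` B `&` ~` Btilde.  By coarseness, from every state of D the run
   visits B with probability at least p.  A run that never visits B nor
   Btilde ([undecided]) is, for every N, outside B at steps 0..N-1 and in D
   at step N.  The measure P is only known through the cylinder formula, so
   the Markov property is expressed with iterated kernel integrals [cylf]:
   weighting the prefix event by the probability [leave_lim] of visiting B
   afterwards yields
        p * P(undecided) <= P(avoid B at steps 0..N, visit B later).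
   The right-hand side is a decreasing family of events with empty
   intersection, so it tends to 0 and P(undecided) = 0. *)

Section iterated_kernel_integral.
Context {d : measure_display} {S : measurableType d} {R : realType}.
Variable kappa : R.-pker S ~> S.
Local Open Scope ereal_scope.

(* cylf [:: A_0; ...; A_{n-1}] f s =
     1_{A_0}(s) * \int kappa(s,ds_1) 1_{A_1}(s_1) * ... \int kappa(s_{n-1},ds_n) f(s_n),
   the expectation of f at step n restricted to runs with r_i \in A_i, i < n. *)
Fixpoint cylf (As : seq (set S)) (f : S -> \bar R) : S -> \bar R :=
  match As with
  | [::] => f
  | A :: As' => fun s => (\1_A s)%:E * \int[kappa s]_y cylf As' f y
  end.

Lemma cylf_cat As Bs : cyl kappa (As ++ Bs) = cylf As (cyl kappa Bs).
Proof. by elim: As => [//|A As IH] /=; apply/funext => s; rewrite IH. Qed.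

Lemma cyl_cylf As : cyl kappa As = cylf As (fun _ => 1).
Proof. by rewrite -[in LHS](cats0 As) cylf_cat. Qed.

Definition all_meas (As : seq (set S)) := forall A, A \in As -> measurable A.

Lemma all_meas_cons A As : all_meas (A :: As) -> measurable A /\ all_meas As.
Proof.
move=> h; split; first by apply: h; rewrite inE eqxx.
by move=> C CA; apply: h; rewrite inE CA orbT.
Qed.

Lemma all_meas_nseq n (A : set S) : measurable A -> all_meas (nseq n A).
Proof. by move=> mA C; rewrite mem_nseq => /andP[_ /eqP ->]. Qed.

Lemma all_meas_cat As Bs : all_meas As -> all_meas Bs -> all_meas (As ++ Bs).
Proof. by move=> hA hB C; rewrite mem_cat => /orP[/hA|/hB]. Qed.

Lemma indic_measurable (A : set S) : measurable A ->
  measurable_fun [set: S] (fun y => (\1_A y)%:E : \bar R).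
Proof. by move=> mA; apply/measurable_EFinP; exact: measurable_indic. Qed.

Lemma cylf_ge0 As (f : S -> \bar R) : (forall x, 0 <= f x) ->
  forall x, 0 <= cylf As f x.
Proof.
move=> f0; elim: As => [//|A As' IH] x /=.
apply: mule_ge0; first by rewrite lee_fin.
by apply: integral_ge0 => y _; exact: IH.
Qed.

Lemma cylf_meas As (f : S -> \bar R) : all_meas As -> measurable_fun [set: S] f ->
  (forall x, 0 <= f x) -> measurable_fun [set: S] (cylf As f).
Proof.
move=> + mf f0; elim: As => [//|A As' IH] /all_meas_cons [mA mAs'] /=.
apply: emeasurable_funM; first exact: indic_measurable.
apply: measurable_fun_integral_kernel => //.
- by move=> U mU; exact: measurable_kernel.
- exact: cylf_ge0.
- exact: IH.
Qed.

Lemma cylf_le As (f g : S -> \bar R) : all_meas As -> measurable_fun [set: S] f ->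
  measurable_fun [set: S] g -> (forall x, 0 <= f x) -> (forall x, f x <= g x) ->
  forall x, cylf As f x <= cylf As g x.
Proof.
move=> + mf mg f0 fg; have g0 y : 0 <= g y by apply: le_trans (fg y).
elim: As => [//|A As' IH] /all_meas_cons [mA mAs'] x /=.
apply: lee_wpmul2l; first by rewrite lee_fin.
apply: ge0_le_integral => //; try exact: cylf_meas.
- by move=> y _; exact: cylf_ge0.
- by move=> y _; exact: IH.
Qed.

Lemma cylf_add As (f g : S -> \bar R) : all_meas As -> measurable_fun [set: S] f ->
  measurable_fun [set: S] g -> (forall x, 0 <= f x) -> (forall x, 0 <= g x) ->
  cylf As (f \+ g) = cylf As f \+ cylf As g.
Proof.
move=> + mf mg f0 g0; elim: As => [//|A As' IH] /all_meas_cons [mA mAs'] /=.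
apply/funext => x; rewrite IH //= ge0_integralD //; try exact: cylf_meas;
  try by move=> y _; exact: cylf_ge0.
by rewrite indicE; case: (x \in A); rewrite /= ?mul1e ?mul0e ?adde0.
Qed.

Lemma cylf_scale As (f : S -> \bar R) (k : R) : all_meas As -> measurable_fun [set: S] f ->
  (forall x, 0 <= f x) -> (0 <= k)%R ->
  cylf As (fun x => k%:E * f x) = (fun x => k%:E * cylf As f x).
Proof.
move=> + mf f0 k0; elim: As => [//|A As' IH] /all_meas_cons [mA mAs'] /=.
apply/funext => x; rewrite IH // ge0_integralZl ?lee_fin //; try exact: cylf_meas.
- by rewrite muleCA.
- by move=> y _; exact: cylf_ge0.
Qed.

Lemma cylf_cvg As (f : (S -> \bar R)^nat) : all_meas As ->
  (forall m, measurable_fun [set: S] (f m)) -> (forall m x, 0 <= f m x) ->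
  (forall x, nondecreasing_seq (f ^~ x)) ->
  forall x, cylf As (f m) x @[m --> \oo] --> cylf As (fun y => limn (f ^~ y)) x.
Proof.
move=> + mf f0 ndf; elim: As => [_|A As' IH /all_meas_cons [mA mAs']] x /=.
  exact: ereal_nondecreasing_is_cvgn.
have -> : \int[kappa x]_y cylf As' (fun y0 => limn (f ^~ y0)) y =
          \int[kappa x]_y limn (fun m => cylf As' (f m) y).
  by apply: eq_integral => y _; rewrite (cvg_lim _ (IH mAs' y)).
have int_cvg : \int[kappa x]_y cylf As' (f m) y @[m --> \oo] -->
               \int[kappa x]_y limn (fun m => cylf As' (f m) y).
  apply: cvg_monotone_convergence => //.
  - by move=> m; exact: cylf_meas.
  - by move=> m y _; exact: cylf_ge0.
  - by move=> y _ m n mn; apply: cylf_le => // z; exact: ndf.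
rewrite indicE; case: (x \in A) => /=.
  by under eq_fun do rewrite mul1e; rewrite mul1e.
by under eq_fun do rewrite mul0e; rewrite mul0e; exact: cvg_cst.
Qed.

Lemma cyl_ge0 As x : 0 <= cyl kappa As x.
Proof. by rewrite cyl_cylf; apply: cylf_ge0. Qed.

Lemma cyl_meas As : all_meas As -> measurable_fun [set: S] (cyl kappa As).
Proof. by move=> h; rewrite cyl_cylf; apply: cylf_meas. Qed.

Lemma kernel_integral_le1 (g : S -> \bar R) x : measurable_fun [set: S] g ->
  (forall y, 0 <= g y) -> (forall y, g y <= 1) -> \int[kappa x]_y g y <= 1.
Proof.
move=> mg g0 g1; apply: le_trans (_ : \int[kappa x]_y cst 1 y <= 1).
  exact: ge0_le_integral.
by rewrite integral_cst // prob_kernel mul1e.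
Qed.

Lemma cyl_le1 As x : all_meas As -> cyl kappa As x <= 1.
Proof.
elim: As x => [//|A As IH] x /all_meas_cons [mA mAs] /=.
rewrite indicE; case: (x \in A); rewrite /= ?mul0e // mul1e.
apply: kernel_integral_le1; first exact: cyl_meas.
- by move=> y; exact: cyl_ge0.
- by move=> y; exact: IH.
Qed.

Lemma cyl_single (A : set S) : cyl kappa [:: A] = fun y => (\1_A y)%:E.
Proof. by apply/funext => y /=; rewrite integral_cst // prob_kernel mul1e mule1. Qed.

Lemma cyl_cat_le As Bs y : all_meas As -> all_meas Bs ->
  cyl kappa (As ++ Bs) y <= cyl kappa As y.
Proof.
move=> hA hB; rewrite cylf_cat (cyl_cylf As).
apply: cylf_le => //; first exact: cyl_meas.
- by move=> z; exact: cyl_ge0.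
- by move=> z; exact: cyl_le1.
Qed.

End iterated_kernel_integral.

Section cylinder_sets.
Context {d : measure_display} {S : measurableType d}.

Definition cyls (As : seq (set S)) : set (run S) :=
  [set r : run S | forall i, (i < size As)%N -> nth setT As i (r i)].

Lemma cyls_nseq n (A : set S) :
  cyls (nseq n A) = [set r : run S | forall i, (i < n)%N -> A (r i)].
Proof.
apply/seteqP; split => r /= H i; rewrite ?size_nseq => hi.
  by have := H i; rewrite size_nseq nth_nseq hi; apply.
by rewrite nth_nseq hi; apply: H.
Qed.

Lemma measurable_coord n (A : set S) : measurable A ->
  measurable [set r : run S | A (r n)].
Proof.
move=> mA; apply: sub_gen_smallest; exists n => //.
by exists A => //; rewrite setTI.
Qed.

Lemma measurable_cyls As : all_meas As -> measurable (cyls As).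
Proof.
move=> h; have -> : cyls As = \bigcap_(i in [set i | (i < size As)%N])
                                [set r : run S | nth setT As i (r i)].
  by apply/seteqP; split => r /= H i; apply: H.
apply: bigcap_measurableType => i /= iA; apply: measurable_coord.
by apply: h; exact: mem_nth.
Qed.

Lemma measurable_Fev (A : set S) : measurable A -> measurable (Fev A : set (run S)).
Proof.
move=> mA; have -> : Fev A = \bigcup_n [set r : run S | A (r n)].
  by apply/seteqP; split => r /= [n]; [|move=> _] => An; exists n.
by apply: bigcupT_measurable => n; exact: measurable_coord.
Qed.

Lemma Fev_bigcup (B : set S) :
  Fev B = \bigcup_n ~` (cyls (nseq n.+1 (~` B)) : set (run S)).
Proof.
apply/seteqP; split => r.
  case=> n Brn; exists n => //.
  by rewrite cyls_nseq /= => H; exact: (H n).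
case=> m _; rewrite cyls_nseq /= => /existsNP [i] /not_implyP [_].
by move=> /contrapT Bri; exists i.
Qed.

End cylinder_sets.

Section hitting_probability.
Context {d : measure_display} {S : measurableType d} {R : realType}.
Variables (kappa : R.-pker S ~> S) (B : set S).
Hypothesis mB : measurable B.
Local Open Scope ereal_scope.

Let mnB : measurable (~` B). Proof. exact: measurableC. Qed.
Let all_meas_nB n : all_meas (nseq n (~` B)). Proof. exact: all_meas_nseq. Qed.

(* probability that the next m states after x all avoid B *)
Definition stay (m : nat) (x : S) : \bar R :=
  \int[kappa x]_y cyl kappa (nseq m (~` B)) y.

(* probability that x avoids B but one of the next m states is in B *)
Definition leave (m : nat) (x : S) : \bar R := (\1_(~` B) x)%:E * (1 - stay m x).

Lemma stay_ge0 m x : 0 <= stay m x.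
Proof. by apply: integral_ge0 => y _; exact: cyl_ge0. Qed.

Lemma stay_le1 m x : stay m x <= 1.
Proof.
apply: kernel_integral_le1; first exact: cyl_meas.
- by move=> y; exact: cyl_ge0.
- by move=> y; exact: cyl_le1.
Qed.

Lemma measurable_stay m : measurable_fun [set: S] (stay m).
Proof.
apply: measurable_fun_integral_kernel; last exact: cyl_meas.
- by move=> U mU; exact: measurable_kernel.
- by move=> y; exact: cyl_ge0.
Qed.

Lemma stay_nonincr m x : stay m.+1 x <= stay m x.
Proof.
apply: ge0_le_integral => //; try exact: cyl_meas;
  try by move=> y _; exact: cyl_ge0.
by move=> y _; rewrite -addn1 nseqD; exact: cyl_cat_le.
Qed.

Lemma leave_ge0 m x : 0 <= leave m x.
Proof. by apply: mule_ge0; rewrite ?lee_fin // subre_ge0 // stay_le1. Qed.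

Lemma measurable_leave m : measurable_fun [set: S] (leave m).
Proof.
apply: emeasurable_funM; first exact: indic_measurable.
by apply: emeasurable_funB => //; exact: measurable_stay.
Qed.

Lemma leave_nondecr x : nondecreasing_seq (leave ^~ x).
Proof.
apply/nondecreasing_seqP => m; apply: lee_wpmul2l; first by rewrite lee_fin.
by apply: leeB => //; exact: stay_nonincr.
Qed.

Lemma indic_split m x :
  (\1_(~` B) x)%:E = cyl kappa (nseq m.+1 (~` B)) x + leave m x.
Proof.
rewrite /leave /=; have fin : stay m x \is a fin_num.
  by rewrite ge0_fin_numE ?stay_ge0 // (le_lt_trans (stay_le1 m x)) ?ltey.
rewrite indicE; case: (x \in ~` B); rewrite /= ?mul0e ?adde0 // !mul1e.
by rewrite addeC subeK.
Qed.

(* probability that x avoids B but the run from x eventually visits B *)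
Definition leave_lim (x : S) : \bar R := limn (leave ^~ x).

Lemma leave_lim_ge0 x : 0 <= leave_lim x.
Proof.
apply: lime_ge; first exact/ereal_nondecreasing_is_cvgn/leave_nondecr.
by apply: nearW => m; exact: leave_ge0.
Qed.

Lemma measurable_leave_lim : measurable_fun [set: S] leave_lim.
Proof.
apply: (emeasurable_fun_cvg leave) => [m|y _]; first exact: measurable_leave.
exact/ereal_nondecreasing_is_cvgn/leave_nondecr.
Qed.

Variable Pd : S -> probability (run S) R.
Hypothesis hPd : forall s : S, is_run_measure kappa (\d_s) (Pd s).

Lemma Pd_cyls As x : all_meas As -> Pd x (cyls As) = cyl kappa As x.
Proof.
move=> h; rewrite /cyls (hPd x h) integral_dirac ?diracT ?mul1e //.
exact: cyl_meas.
Qed.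

(* for x outside B, leave m x is the probability under P_x of visiting B
   within the first m+1 steps; it increases to the probability of F B *)
Lemma leave_cvg x : (~` B) x -> leave ^~ x @ \oo --> Pd x (Fev B).
Proof.
move=> nBx; pose F m := ~` (cyls (nseq m.+1 (~` B)) : set (run S)).
have mF m : measurable (F m) := measurableC (measurable_cyls (@all_meas_nB m.+1)).
have -> : leave ^~ x = Pd x \o F.
  apply/funext => m; rewrite /= probability_setC; last exact: measurable_cyls.
  rewrite Pd_cyls; last exact: all_meas_nB.
  by rewrite /= /leave /stay indicE (mem_set nBx) !mul1e.
have -> : Fev B = \bigcup_n F n by exact: Fev_bigcup.
apply: nondecreasing_cvg_mu => //.
  by rewrite -Fev_bigcup; exact: measurable_Fev.
move=> m n mn; apply/subsetPset => r; rewrite /F !cyls_nseq /= => H1 H2.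
by apply: H1 => i im; apply: H2; apply: leq_trans im _; rewrite ltnS.
Qed.

Lemma coarse_leave_lim (p : R) : (0 < p)%R ->
  (forall s, p%:E <= Pd s (Fev B) \/ Pd s (Fev B) = 0) ->
  forall x, p%:E * (\1_(~` B `&` ~` Btilde Pd B) x)%:E <= leave_lim x.
Proof.
move=> p0 hp x; have leave_is_cvg := ereal_nondecreasing_is_cvgn (leave_nondecr x).
rewrite indicE; case: (boolP (x \in _)) => [/set_mem [nBx nBtx]|_] /=; last first.
  rewrite mule0; apply: lime_ge => //.
  by apply: nearW => m; exact: leave_ge0.
rewrite mule1 /leave_lim (cvg_lim _ (leave_cvg nBx)) //.
by case: (hp x) => // Pd0; exfalso; exact: nBtx.
Qed.

End hitting_probability.

Section coarse_implies_decisive.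
Context {d : measure_display} {S : measurableType d} {R : realType}.
Variables (kappa : R.-pker S ~> S) (B : set S).
Hypothesis mB : measurable B.
Variables (mu : probability S R) (P : probability (run S) R).
Hypothesis hP : is_run_measure kappa mu P.
Local Open Scope ereal_scope.

Let mnB : measurable (~` B). Proof. exact: measurableC. Qed.
Let all_meas_nB n : all_meas (nseq n (~` B)). Proof. exact: all_meas_nseq. Qed.

Definition late_visit (N : nat) : set (run S) := cyls (nseq N.+1 (~` B)) `&` Fev B.

Lemma measurable_late_visit N : measurable (late_visit N).
Proof. by apply: measurableI; [exact: measurable_cyls|exact: measurable_Fev]. Qed.

(* after N steps avoiding B, leaving B within the next m+1 steps is a late visit *)
Lemma leave_late_visit N m :
  \int[mu]_x cylf kappa (nseq N (~` B)) (leave kappa B m) x <= P (late_visit N).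
Proof.
set T := nseq N (~` B).
have mT : all_meas T := @all_meas_nB N.
have mcyl := cyl_meas kappa (@all_meas_nB m.+1).
have mleave := measurable_leave kappa mB m.
have cyl0 z : 0 <= cyl kappa (nseq m.+1 (~` B)) z by exact: cyl_ge0.
have leave0 z : 0 <= leave kappa B m z by exact: leave_ge0.
have avoid_split : P (cyls (nseq N.+1 (~` B))) =
    P (cyls (nseq (N + m.+1) (~` B))) + \int[mu]_x cylf kappa T (leave kappa B m) x.
  rewrite /cyls (hP (@all_meas_nB _)) (hP (@all_meas_nB _)).
  rewrite nseqD cylf_cat -(addn1 N) nseqD cylf_cat cyl_single.
  rewrite -ge0_integralD //; try exact: cylf_meas;
    try by move=> y _; exact: cylf_ge0.
  apply: eq_integral => y _; rewrite -[_ + _]/((_ \+ _) y) -cylf_add //.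
  by congr cylf; apply/funext => z; rewrite (indic_split kappa mB m).
have cover : P (cyls (nseq N.+1 (~` B))) <=
             P (cyls (nseq (N + m.+1) (~` B))) + P (late_visit N).
  apply: le_trans (measureU2 _ _ _); [|exact: measurable_cyls|exact: measurable_late_visit].
  apply: le_measure; rewrite ?inE; [exact: measurable_cyls| |].
    by apply: measurableU; [exact: measurable_cyls|exact: measurable_late_visit].
  move=> r avoidr; have [visit|novisit] := EM (Fev B r); first by right.
  by left; rewrite cyls_nseq => i _ Bi; apply: novisit; exists i.
by move: cover; rewrite avoid_split leeD2lE // fin_num_measure //; exact: measurable_cyls.
Qed.

Lemma leave_lim_late_visit N :
  \int[mu]_x cylf kappa (nseq N (~` B)) (leave_lim kappa B) x <= P (late_visit N).
Proof.
set T := nseq N (~` B); have mT : all_meas T := @all_meas_nB N.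
have mleave := measurable_leave kappa mB.
have leave0 := @leave_ge0 _ _ _ kappa B mB.
have cylf_leave_nondecr y : nondecreasing_seq (fun m => cylf kappa T (leave kappa B m) y).
  by move=> m n mn; apply: cylf_le => // z; exact: leave_nondecr.
have cylf_leave_cvg y : cylf kappa T (leave kappa B m) y @[m --> \oo] -->
                        cylf kappa T (leave_lim kappa B) y.
  by apply: cylf_cvg => // z; exact: leave_nondecr.
have int_cylf_leave_nondecr : nondecreasing_seq
    (fun m => \int[mu]_x cylf kappa T (leave kappa B m) x).
  move=> m n mn; apply: ge0_le_integral => //; try exact: cylf_meas;
    try by move=> y _; exact: cylf_ge0.
  by move=> y _; exact: cylf_leave_nondecr.
have -> : \int[mu]_x cylf kappa T (leave_lim kappa B) x =
          limn (fun m => \int[mu]_x cylf kappa T (leave kappa B m) x).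
  rewrite -monotone_convergence //; try by move=> m; exact: cylf_meas.
  - by apply: eq_integral => y _; rewrite (cvg_lim _ (cylf_leave_cvg y)).
  - by move=> m y _; exact: cylf_ge0.
apply: lime_le; first exact: ereal_nondecreasing_is_cvgn.
by apply: nearW => m; exact: leave_late_visit.
Qed.

Lemma late_visit_cvg0 : P \o late_visit @ \oo --> 0.
Proof.
have late_visit_cap : \bigcap_N late_visit N = set0.
  apply/seteqP; split => r //= H; have [_ [n Brn]] := H 0%N I.
  by have [+ _] := H n I; rewrite cyls_nseq => /(_ n (ltnSn n)).
rewrite -(measure0 P) -late_visit_cap; apply: nonincreasing_cvg_mu.
- by apply: le_lt_trans (probability_le1 P (measurable_late_visit 0)) (ltey _).
- exact: measurable_late_visit.
- by apply: bigcap_measurableType => N _; exact: measurable_late_visit.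
- move=> m n mn; apply/subsetPset => r [+ visit]; rewrite /late_visit !cyls_nseq.
  by move=> avoid; split => // i im; apply: avoid; exact: leq_trans im _.
Qed.

Variable Pd : S -> probability (run S) R.
Hypothesis hPd : forall s : S, is_run_measure kappa (\d_s) (Pd s).
Hypothesis mBt : measurable (Btilde Pd B).

Definition undecided : set (run S) := ~` (Fev B `|` Fev (Btilde Pd B)).

Lemma measurable_undecided : measurable undecided.
Proof. by apply/measurableC/measurableU; exact: measurable_Fev. Qed.

Lemma undecided_sub N :
  undecided `<=` cyls (nseq N (~` B) ++ [:: ~` B `&` ~` Btilde Pd B]).
Proof.
move=> r /= undec i; rewrite size_cat size_nseq addn1 ltnS => iN.
rewrite nth_cat size_nseq; case: ltnP => hi.
  by rewrite nth_nseq hi => Bri; apply: undec; left; exists i.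
have -> : i = N by apply/eqP; rewrite eqn_leq iN hi.
by rewrite subnn /=; split => Hr; apply: undec; [left|right]; exists N.
Qed.

Lemma undecided_le_cylf N : P undecided <=
  \int[mu]_x cylf kappa (nseq N (~` B)) (fun y => (\1_(~` B `&` ~` Btilde Pd B) y)%:E) x.
Proof.
have mTD : all_meas (nseq N (~` B) ++ [:: ~` B `&` ~` Btilde Pd B]).
  apply: all_meas_cat => // A; rewrite inE => /eqP ->.
  by apply: measurableI => //; exact: measurableC.
rewrite -(cyl_single kappa) -cylf_cat -hP //.
apply: le_measure; rewrite ?inE; [exact: measurable_undecided| |exact: undecided_sub].
exact: measurable_cyls.
Qed.

Lemma undecided_bound (p : R) : (0 < p)%R ->
  (forall s, p%:E <= Pd s (Fev B) \/ Pd s (Fev B) = 0) ->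
  forall N, p%:E * P undecided <= P (late_visit N).
Proof.
move=> p0 hp N; set T := nseq N (~` B); set D := ~` B `&` ~` Btilde Pd B.
have mT : all_meas T := @all_meas_nB N.
have mI : measurable_fun [set: S] (fun y => (\1_D y)%:E : \bar R).
  by apply: indic_measurable; apply: measurableI => //; exact: measurableC.
have I0 y : 0 <= (\1_D y)%:E :> \bar R by rewrite lee_fin.
have cylf_pI := cylf_scale kappa mT mI I0 (ltW p0).
have pI0 z : 0 <= p%:E * (\1_D z)%:E.
  by apply: mule_ge0 => //; rewrite lee_fin; exact: ltW.
have mpI : measurable_fun [set: S] (fun y => p%:E * (\1_D y)%:E).
  by apply: emeasurable_funM => //; exact: measurable_cst.
have mcylf_pI : measurable_fun [set: S] (fun y => p%:E * cylf kappa T (fun z => (\1_D z)%:E) y).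
  by rewrite -cylf_pI; exact: cylf_meas.
have mcylf_lim := cylf_meas kappa mT (measurable_leave_lim kappa mB) (leave_lim_ge0 kappa mB).
apply: le_trans (leave_lim_late_visit N); apply: le_trans.
  by apply: lee_wpmul2l; [rewrite lee_fin ltW|exact: undecided_le_cylf].
rewrite -ge0_integralZl ?lee_fin ?(ltW p0) //; first last.
- by move=> y _; exact: cylf_ge0.
- exact: cylf_meas.
apply: ge0_le_integral => // [y _|y _].
  by apply: mule_ge0; [rewrite lee_fin; exact: ltW|exact: cylf_ge0].
rewrite -[X in X <= _]/((fun y => p%:E * cylf kappa T _ y) y) -cylf_pI.
apply: cylf_le => //; first exact: measurable_leave_lim.
exact: coarse_leave_lim.
Qed.

End coarse_implies_decisive.

Unset Implicit Arguments.
Theorem mainTheorem6 (d : measure_display) (S : measurableType d) (R : realType)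
    (kappa : R.-pker S ~> S) (Pd : S -> probability (run S) R) (B : set S) :
  (forall s : S, is_run_measure kappa (\d_s) (Pd s)) ->
  measurable B ->
  measurable (Btilde Pd B) ->
  globally_coarse Pd B ->
  decisive kappa Pd B.
Proof.
move=> hPd mB mBt [p [p0 hp]] mu P hP.
have undecided0 : P (undecided B Pd) = 0%E.
  have bound N := undecided_bound mB hP hPd mBt p0 hp N.
  have pP0 : (p%:E * P (undecided B Pd) <= 0)%E.
    rewrite -(cvg_lim _ (late_visit_cvg0 mB P)) //.
    by apply: lime_ge; [apply/cvg_ex; exists 0%E; exact: late_visit_cvg0|exact: nearW].
  by apply/eqP; rewrite eq_le measure_ge0 andbT -(@pmule_rle0 _ p%:E).
rewrite -[_ `|` _]setCK probability_setC; last exact: measurable_undecided.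
by rewrite undecided0 sube0.
Qed.
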